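(* The space $\mathsf{scf}(\mathrm{UT}_\bullet)=\bigoplus_{n\ge0}\mathsf{scf}(\mathrm{UT}_n)$ is a sub-Hopf algebra of $\mathsf{cf}(\mathrm{UT}_\bullet)$ and is isomorphic to $\mathsf{IG}(q^{-1})$. In particular, for $\pi\in\mathcal{NO}_n$ and $\rho\in\mathcal{NO}_m$ with $n,m\ge0$, $$\mu(\overline{\delta}_\pi\otimes\overline{\delta}_\rho)=\overline{\delta}_{\pi\star_n\rho}\qquad\text{and}\qquad\Delta(\overline{\delta}_\pi)=\sum_{I\subseteq[n]}q^{-\mathrm{asc}_I(\pi)}\,\overline{\delta}_{\pi|^{sh}_I}\otimes\overline{\delta}_{\pi|^{sh}_{I^c}}.$$
   Context: Fix the finite field $\mathbb{F}_q$; $[n]=\{1,\dots,n\}$. $\mathrm{UT}_n$ is the group of $n\times n$ unipotent upper triangular matrices over $\mathbb{F}_q$. A natural unit interval order of $[n]$ is a partial order $\pi\subseteq[n]\times[n]$ with $(i,j)\in\pi\Rightarrow i\le j$ such that for every $(j,k)\in\pi$ with $j\ne k$, all $(i,l)$ with $i\le j$, $k\le l$ lie in $\pi$; $\mathcal{NO}_n$ is the set of these. For such $\pi$, $\mathrm{UT}(\pi)=\{g\in\mathrm{UT}_n:(g-1_n)_{i,j}\ne0\text{ only if }(i,j)\in\pi\}$, $\overline{\delta}_\pi$ is its indicator function, and $\mathsf{scf}(\mathrm{UT}_n)=\mathbb{C}\text{-span}\{\mathrm{Ind}^{\mathrm{UT}_n}_{\mathrm{UT}(\pi)}(\mathbb{1}):\pi\in\mathcal{NO}_n\}$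 ($\mathbb{1}$ the trivial character), which is also spanned by $\{\overline{\delta}_\pi:\pi\in\mathcal{NO}_n\}$. Hopf algebra $\mathsf{cf}(\mathrm{UT}_\bullet)=\bigoplus_n\mathsf{cf}(\mathrm{UT}_n)$ ($\mathsf{cf}$ = complex class functions): for $I\subseteq[n]$, $I^c=[n]\setminus I$, let $\mathrm{UL}_I=\{g\in\mathrm{UT}_n:(g-1_n)_{i,j}\ne0\text{ only if }(i,j)\in I\times I\cup I^c\times I^c\}$, $\mathrm{UR}_I=\{g:(g-1_n)_{i,j}\ne0\text{ only if }(i,j)\in I\times I^c\}$, $\mathrm{UP}_I=\{g:(g-1_n)_{i,j}=0\text{ for }(i,j)\in I^c\times I\}=\mathrm{UL}_I\ltimes\mathrm{UR}_I$ ($\mathrm{UP}_{[i]}=\mathrm{UT}_n$). With $\mathrm{cano}_I:I\to[|I|]$ order-preserving, $\mathrm{UL}_I\cong\mathrm{UT}_{|I|}\times\mathrm{UT}_{|I^c|}$ by relabelling blocks, inducing $\mathrm{st}_{(I,I^c)}$. Product $\mu=\bigoplus_{n\ge i\ge0}\mathrm{Inf}^{\mathrm{UT}_n}_{\mathrm{UL}_{[i]}}\circ\mathrm{st}^{-1}_{([i],[i]^c)}$ with $\mathrm{Inf}\psi(lr)=\psi(l)$; coproduct $\Delta=\bigoplus_n\sum_{I\subseteq[n]}\mathrm{st}_{(I,I^c)}\circ\mathrm{Def}^{\mathrm{UP}_I}_{\mathrm{UL}_I}\circ\mathrm{Res}^{\mathrm{UT}_n}_{\mathrm{UP}_I}$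 with $\mathrm{Def}\psi(g)=\frac1{|\mathrm{UR}_I|}\sum_{x\in\mathrm{UR}_I}\psi(gx)$. Shifted ordinal sum: $\pi\star_n\rho=\pi\sqcup\{(i+n,j+n):(i,j)\in\rho\}\sqcup([n]\times([n+m]\setminus[n]))$. For $I\subseteq[n]$: $\pi|^{sh}_I=\{(\mathrm{cano}_I(i),\mathrm{cano}_I(j)):(i,j)\in\pi,\ i,j\in I\}$ and $\mathrm{asc}_I(\pi)=|\{(i,j)\in I\times I^c:i<j,(i,j)\notin\pi\}|$. $\mathsf{IG}(q^{-1})$ is the $\mathbb{C}$-Hopf algebra with basis $\{\mathrm{inc}(\pi):\pi\in\mathcal{NO}_n,n\ge0\}$, product $\mathrm{inc}(\pi)\otimes\mathrm{inc}(\rho)\mapsto\mathrm{inc}(\pi\star_n\rho)$ and coproduct $\mathrm{inc}(\pi)\mapsto\sum_{I\subseteq[n]}q^{-\mathrm{asc}_I(\pi)}\mathrm{inc}(\pi|^{sh}_I)\otimes\mathrm{inc}(\pi|^{sh}_{I^c})$. *)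

From HB Require Import structures.
From mathcomp Require Import all_boot all_order all_algebra all_field.
Set Implicit Arguments. Unset Strict Implicit. Unset Printing Implicit Defensive.
Import Order.TTheory GRing.Theory Num.Theory.
Local Open Scope ring_scope.

(* Indices [n] = {1..n} of the paper are represented 0-based by 'I_n.
   A relation on [n] is a set of pairs {set 'I_n * 'I_n}. *)

Section Defs.
Variable F : finFieldType.

Definition qF : algC := (#|F|)%:R.

Definition isNO (n : nat) (pi : {set 'I_n * 'I_n}) : bool :=
  [&& [forall i : 'I_n, (i, i) \in pi],
      [forall x in pi, (x.1 <= x.2)%N],
      [forall x in pi, forall y in pi, (x.2 == y.1) ==> ((x.1, y.2) \in pi)],
      [forall x in pi, ((x.2, x.1) \in pi) ==> (x.1 == x.2)] &
      [forall x in pi, (x.1 != x.2) ==>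
         [forall i : 'I_n, forall l : 'I_n,
            ((i <= x.1)%N && (x.2 <= l)%N) ==> ((i, l) \in pi)]]].

Definition UT (n : nat) : {set 'M[F]_n} :=
  [set g : 'M[F]_n | [forall i : 'I_n, forall j : 'I_n,
     ((j < i)%N ==> (g i j == 0)) && ((i == j) ==> (g i j == 1))]].

Definition UTpat (n : nat) (pi : {set 'I_n * 'I_n}) : {set 'M[F]_n} :=
  [set g in UT n | [forall i : 'I_n, forall j : 'I_n,
     ((g - 1%:M) i j != 0) ==> ((i, j) \in pi)]].

Definition delta (n : nat) (pi : {set 'I_n * 'I_n}) (g : 'M[F]_n) : algC :=
  (g \in UTpat pi)%:R.

Definition IndTriv (n : nat) (pi : {set 'I_n * 'I_n}) (g : 'M[F]_n) : algC :=
  (#|UTpat pi|%:R)^-1 *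
  \sum_(x in UT n) ((x *m g *m invmx x) \in UTpat pi)%:R.

(* class functions of UT_n (values outside UT_n are irrelevant) *)
Definition is_classfun (n : nat) (chi : 'M[F]_n -> algC) : Prop :=
  forall g x, g \in UT n -> x \in UT n -> chi (invmx x *m g *m x) = chi g.

(* product mu = Inf o st^{-1}: for g = l r in UT_(n+m) with l block diagonal,
   Inf (chi (x) psi)(g) = chi(upper-left block) * psi(lower-right block) *)
Definition mu (n m : nat) (chi : 'M[F]_n -> algC) (psi : 'M[F]_m -> algC)
  (g : 'M[F]_(n + m)) : algC := chi (ulsubmx g) * psi (drsubmx g).

(* cano_I as a 0-based rank *)
Definition cano (n : nat) (I : {set 'I_n}) (i : 'I_n) : nat :=
  #|[set j in I | (j < i)%N]|.

(* entry of a matrix indexed by naturals (0 outside range) *)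
Definition ent (k : nat) (A : 'M[F]_k) (i j : nat) : F :=
  match (insub i : option 'I_k), (insub j : option 'I_k) with
  | Some i', Some j' => A i' j'
  | _, _ => 0
  end.

Definition stinv (n a b : nat) (I : {set 'I_n}) (h1 : 'M[F]_a) (h2 : 'M[F]_b)
  : 'M[F]_n :=
  \matrix_(i, j)
    if (i \in I) && (j \in I) then ent h1 (cano I i) (cano I j)
    else if (i \notin I) && (j \notin I) then ent h2 (cano (~: I) i) (cano (~: I) j)
    else 0.

Definition UR (n : nat) (I : {set 'I_n}) : {set 'M[F]_n} :=
  [set x in UT n | [forall i : 'I_n, forall j : 'I_n,
     ((x - 1%:M) i j != 0) ==> ((i \in I) && (j \notin I))]].

(* the I-summand of the coproduct: st o Def o Res, as a function on
   UT_a x UT_b (identifying cf(UT_a) (x) cf(UT_b) with functions on the product) *)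
Definition DeltaI (n a b : nat) (chi : 'M[F]_n -> algC) (I : {set 'I_n})
  (h1 : 'M[F]_a) (h2 : 'M[F]_b) : algC :=
  (#|UR I|%:R)^-1 * \sum_(x in UR I) chi (stinv I h1 h2 *m x).

Definition inrel (n : nat) (pi : {set 'I_n * 'I_n}) (i j : nat) : bool :=
  [exists y in pi, (val y.1 == i) && (val y.2 == j)].

Definition star (n m : nat) (pi : {set 'I_n * 'I_n}) (rho : {set 'I_m * 'I_m})
  : {set 'I_(n + m) * 'I_(n + m)} :=
  [set x : 'I_(n + m) * 'I_(n + m) | if (x.1 < n)%N && (x.2 < n)%N then inrel pi x.1 x.2
           else if (n <= x.1)%N && (n <= x.2)%N then inrel rho (x.1 - n) (x.2 - n)
           else (x.1 < n)%N && (n <= x.2)%N].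

(* pi|^{sh}_I, as a relation on [k] (used with k = |I|) *)
Definition shres (n : nat) (pi : {set 'I_n * 'I_n}) (I : {set 'I_n}) (k : nat)
  : {set 'I_k * 'I_k} :=
  [set x : 'I_k * 'I_k | [exists y in pi, [&& y.1 \in I, y.2 \in I,
                                cano I y.1 == x.1 & cano I y.2 == x.2]]].

Definition asc (n : nat) (pi : {set 'I_n * 'I_n}) (I : {set 'I_n}) : nat :=
  #|[set y : 'I_n * 'I_n | [&& y.1 \in I, y.2 \notin I, (y.1 < y.2)%N
                                & y \notin pi]]|.

End Defs.

From mathcomp Require Import all_boot all_order all_algebra all_field.
From mathcomp Require Import ring.
Set Implicit Arguments. Unset Strict Implicit. Unset Printing Implicit Defensive.
Import GRing.Theory Num.Theory.
Local Open Scope ring_scope.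

(* UT(pi) is the pattern group of the strict part of pi, which for a natural
   unit interval order is an upper ideal of {(i, j) | i < j}; so conjugation
   by UT_n preserves UT(pi), delta_pi is a class function and Ind(1) is
   [UT_n : UT(pi)] delta_pi.  At the 0/1 incidence matrix of pi, delta_rho
   takes the value [pi \subset rho]: the system is unitriangular, so the
   delta_pi are linearly independent.  A matrix lies in UT(pi \star_n rho) iff
   its diagonal blocks lie in UT(pi) and UT(rho), the upper right block being
   free.  For the coproduct write the elements of UP_I as l x with
   l = st^-1(h1, h2) in UL_I and x in UR_I.  Then l x - 1 = (l - 1) + l (x - 1),
   the summands being supported on (I x I) u (I^c x I^c) and on I x I^c, so
   delta_pi (l x) = delta_pi l * [1 + l (x - 1) \in UT(pi)]; since
   x |-> 1 + l (x - 1) permutes UR_I, the average over UR_I is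
   |UR_I :&: UT(pi)| / |UR_I| = q^(-asc_I(pi)). *)

Lemma addr_neq0 (V : nmodType) (x y : V) : x + y != 0 -> (x != 0) || (y != 0).
Proof. by apply: contraNT; rewrite negb_or !negbK => /andP[/eqP-> /eqP->]; rewrite addr0. Qed.

Lemma addmxE (V : nmodType) m n (A B : 'M[V]_(m, n)) i j : (A + B) i j = A i j + B i j.
Proof. by rewrite mxE. Qed.

Lemma sub1mxE (R : pzRingType) n (x : 'M[R]_n) i j : (x - 1%:M) i j = x i j - (i == j)%:R.
Proof. by rewrite !mxE. Qed.

Lemma mulmx_neq0 (R : pzSemiRingType) m n p (A : 'M[R]_(m, n)) (B : 'M[R]_(n, p)) i j :
  (A *m B) i j != 0 -> exists k, (A i k != 0) && (B k j != 0).
Proof.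
move=> H; apply/existsP; apply: contraNT H => /existsPn Hk.
rewrite mxE big1 // => k _.
by have:= Hk k; rewrite negb_and !negbK => /orP[/eqP->|/eqP->]; rewrite ?mul0r ?mulr0.
Qed.

Lemma mulmx_sub1 (R : comPzRingType) n (x y : 'M[R]_n) :
  x *m y - 1%:M = (x - 1%:M) *m (y - 1%:M) + (x - 1%:M) + (y - 1%:M).
Proof.
rewrite mulmxBl !mulmxBr !mul1mx mulmx1.
by apply/matrixP => i j; rewrite !mxE; ring.
Qed.

Lemma NO_refl n (pi : {set 'I_n * 'I_n}) i : isNO pi -> (i, i) \in pi.
Proof. by case/and5P => /forallP H _ _ _ _. Qed.

Lemma NO_le n (pi : {set 'I_n * 'I_n}) i j : isNO pi -> (i, j) \in pi -> (i <= j)%N.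
Proof. by case/and5P => _ /forallP H _ _ _ Hij; have := H (i, j); rewrite Hij. Qed.

Lemma NO_widen n (pi : {set 'I_n * 'I_n}) (k l i j : 'I_n) : isNO pi ->
  (k, l) \in pi -> (k < l)%N -> (i <= k)%N -> (l <= j)%N -> (i, j) \in pi.
Proof.
case/and5P => _ _ _ _ /forallP H kl lt ik lj.
have := H (k, l); rewrite kl /= -val_eqE /= ltn_eqF // => /forallP/(_ i)/forallP/(_ j).
by rewrite ik lj.
Qed.

Section Patterns.
Variable F : finFieldType.

Definition pattern_set n (P : 'I_n -> 'I_n -> bool) : {set 'M[F]_n} :=
  [set x | [forall i, forall j, ((x - 1%:M) i j != 0) ==> P i j]].

Lemma pattern_setP n (P : 'I_n -> 'I_n -> bool) x :
  reflect (forall i j, (x - 1%:M) i j != 0 -> P i j) (x \in pattern_set P).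
Proof.
rewrite inE; apply: (iffP forallP) => [H i j|H i].
  by apply/implyP; exact: (forallP (H i)).
by apply/forallP=> j; apply/implyP; exact: H.
Qed.

Lemma pattern_setI n (P Q : 'I_n -> 'I_n -> bool) x :
  (x \in pattern_set P) && (x \in pattern_set Q) =
  (x \in pattern_set (fun i j => P i j && Q i j)).
Proof.
apply/andP/pattern_setP => [[/pattern_setP HP /pattern_setP HQ] i j Hn|H]; first by rewrite HP ?HQ.
by split; apply/pattern_setP => i j /H/andP[].
Qed.

Lemma card_pattern_set n (P : 'I_n -> 'I_n -> bool) :
  #|pattern_set P| = (#|F| ^ #|[set p : 'I_n * 'I_n | P p.1 p.2]|)%N.
Proof.
pose phi (x : 'M[F]_n) : {ffun 'I_n * 'I_n -> F} := [ffun p => (x - 1%:M) p.1 p.2].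
have phi_inj : injective phi.
  move=> x y /ffunP E; apply: (@addIr _ (- 1%:M)); apply/matrixP => i j.
  by have := E (i, j); rewrite !ffunE.
set D := [set p : 'I_n * 'I_n | P p.1 p.2].
have -> : (#|F| ^ #|D|)%N = #|pffun_on (0 : F) D [set: F]|.
  by rewrite card_pffun_on cardsT.
rewrite -(card_imset _ phi_inj); apply: eq_card => f.
apply/imsetP/pffun_onP => [[x /pattern_setP Hx ->]|[/subsetP Hs _]].
  split=> [|y _]; last by rewrite inE.
  by apply/subsetP => p; rewrite !inE ffunE; apply: Hx.
exists (1%:M + \matrix_(i, j) f (i, j)).
  apply/pattern_setP => i j; rewrite [1%:M + _]addrC addrK mxE => Hn.
  by have := Hs (i, j); rewrite !inE; apply.
by apply/ffunP => [[i j]]; rewrite ffunE /= [1%:M + _]addrC addrK mxE.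
Qed.

Lemma pattern_set_mul n (P : 'I_n -> 'I_n -> bool) x y :
  (forall i k j, P i k -> P k j -> P i j) ->
  x \in pattern_set P -> y \in pattern_set P -> x *m y \in pattern_set P.
Proof.
move=> Ptr /pattern_setP Hx /pattern_setP Hy; apply/pattern_setP => i j.
rewrite mulmx_sub1 2!addmxE => /addr_neq0/orP[/addr_neq0/orP[|]|]; [|exact: Hx|exact: Hy].
by case/mulmx_neq0 => k /andP[/Hx ik /Hy kj]; exact: Ptr ik kj.
Qed.

End Patterns.
Arguments pattern_set {F n} P.

Section UnitriangularGroup.
Variable F : finFieldType.

Lemma UTE n : UT F n = pattern_set (fun i j : 'I_n => (i < j)%N).
Proof.
apply/setP => x; apply/idP/pattern_setP.
- rewrite inE => /forallP H i j; rewrite sub1mxE.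
  have/forallP/(_ j)/andP[/implyP lower /implyP diag] := H i.
  case: (ltngtP i j) => // [ji|eij].
    by rewrite (eqP (lower ji)) -val_eqE /= gtn_eqF // subrr eqxx.
  have eij' : i == j by rewrite -val_eqE /= eij.
  by rewrite eij' (eqP (diag eij')) subrr eqxx.
- move=> H; rewrite inE; apply/forallP => i; apply/forallP => j.
  apply/andP; split; apply/implyP => Hij; apply/eqP.
  + have ne : (i == j) = false by rewrite -val_eqE /= gtn_eqF.
    apply: contraTeq (Hij) => Hn; have := H i j; rewrite sub1mxE ne subr0 => /(_ Hn).
    by rewrite -leqNgt => /ltnW.
  + rewrite -(eqP Hij); apply: contraTeq isT => Hn; have := H i i.
    by rewrite sub1mxE eqxx subr_eq0 => /(_ Hn); rewrite ltnn.
Qed.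

Lemma UT_lower0 n (x : 'M[F]_n) (i j : 'I_n) : x \in UT F n -> (j < i)%N -> x i j = 0.
Proof. by rewrite inE => /forallP/(_ i)/forallP/(_ j)/andP[/implyP H _] /H/eqP. Qed.

Lemma UT_diag n (x : 'M[F]_n) (i : 'I_n) : x \in UT F n -> x i i = 1.
Proof. by rewrite inE => /forallP/(_ i)/forallP/(_ i)/andP[_ /implyP/(_ (eqxx i))/eqP]. Qed.

Lemma UT_neq0_le n (x : 'M[F]_n) (i j : 'I_n) : x \in UT F n -> x i j != 0 -> (i <= j)%N.
Proof. by move=> Hx; apply: contraR; rewrite -ltnNge => /(UT_lower0 Hx) ->. Qed.

Lemma UT1 n : (1%:M : 'M[F]_n) \in UT F n.
Proof. by rewrite UTE; apply/pattern_setP => i j; rewrite subrr mxE eqxx. Qed.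

Lemma UT_mul n (x y : 'M[F]_n) : x \in UT F n -> y \in UT F n -> x *m y \in UT F n.
Proof. by rewrite UTE; apply: pattern_set_mul => i k j; apply: ltn_trans. Qed.

Lemma UT_unitmx n (x : 'M[F]_n) : x \in UT F n -> x \in unitmx.
Proof.
move=> Hx; rewrite unitmxE -det_tr det_trig; last first.
  by apply/is_trig_mxP => i j ij; rewrite mxE UT_lower0.
by rewrite big1 ?unitr1 // => i _; rewrite mxE UT_diag.
Qed.

(* Left multiplication by x permutes the finite set UT_n, so it hits 1. *)
Lemma UT_inv n (x : 'M[F]_n) : x \in UT F n -> invmx x \in UT F n.
Proof.
move=> Hx; have Hu := UT_unitmx Hx.
have E : mulmx x @: UT F n = UT F n.
  apply/eqP; rewrite eqEcard card_imset ?leqnn ?andbT; last exact: can_inj (mulKmx Hu).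
  by apply/subsetP => _ /imsetP[y Hy ->]; exact: UT_mul.
have : (1%:M : 'M[F]_n) \in mulmx x @: UT F n by rewrite E UT1.
by case/imsetP => y Hy E1; rewrite -[invmx x]mulmx1 E1 mulKmx.
Qed.

Lemma UTpatE n (pi : {set 'I_n * 'I_n}) :
  UTpat F pi = pattern_set (fun i j => (i < j)%N && ((i, j) \in pi)).
Proof.
apply/setP => g; rewrite inE UTE -pattern_setI; congr (_ && _).
apply/forallP/pattern_setP => H i => [j|]; first exact/implyP/(forallP (H i)).
by apply/forallP => j; exact/implyP/H.
Qed.

Lemma UTpat1 n (pi : {set 'I_n * 'I_n}) : (1%:M : 'M[F]_n) \in UTpat F pi.
Proof. by rewrite UTpatE; apply/pattern_setP => i j; rewrite subrr mxE eqxx. Qed.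

Lemma UTpat_conj_closed n (pi : {set 'I_n * 'I_n}) (x y g : 'M[F]_n) : isNO pi ->
  x \in UT F n -> y \in UT F n -> x *m y = 1%:M ->
  g \in UTpat F pi -> x *m g *m y \in UTpat F pi.
Proof.
move=> Hpi Hx Hy Hxy; rewrite !UTpatE => /pattern_setP Hg; apply/pattern_setP => i j.
have -> : x *m g *m y - 1%:M = x *m (g - 1%:M) *m y.
  by rewrite mulmxBr mulmx1 mulmxBl Hxy.
case/mulmx_neq0 => l /andP[/mulmx_neq0[k /andP[xik /Hg/andP[kl Hkl]]] ylj].
have ik := UT_neq0_le Hx xik; have lj := UT_neq0_le Hy ylj.
rewrite (NO_widen Hpi Hkl kl ik lj) andbT.
exact: leq_ltn_trans ik (leq_trans kl lj).
Qed.

Lemma UTpat_conj n (pi : {set 'I_n * 'I_n}) (x g : 'M[F]_n) : isNO pi ->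
  x \in UT F n -> (x *m g *m invmx x \in UTpat F pi) = (g \in UTpat F pi).
Proof.
move=> Hpi Hx; have Hu := UT_unitmx Hx; have Hi := UT_inv Hx.
apply/idP/idP; last by apply: UTpat_conj_closed => //; rewrite mulmxV.
move/(UTpat_conj_closed Hpi Hi Hx (mulVmx Hu)).
by rewrite !mulmxA mulVmx // mul1mx -mulmxA mulVmx // mulmx1.
Qed.

Lemma delta_classfun n (pi : {set 'I_n * 'I_n}) : isNO pi -> is_classfun (@delta F n pi).
Proof.
by move=> Hpi g x Hg Hx; rewrite /delta -(UTpat_conj g Hpi (UT_inv Hx)) invmxK.
Qed.

Lemma IndTriv_delta n (pi : {set 'I_n * 'I_n}) g : isNO pi -> g \in UT F n ->
  IndTriv pi g = #|UT F n|%:R / #|UTpat F pi|%:R * delta pi g.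
Proof.
move=> Hpi Hg; rewrite /IndTriv (eq_bigr (fun _ => delta pi g)).
  by rewrite sumr_const -[delta pi g *+ _]mulr_natl mulrCA mulrA.
by move=> x Hx; rewrite UTpat_conj.
Qed.

Lemma UTpat_index_neq0 n (pi : {set 'I_n * 'I_n}) :
  (#|UT F n|%:R / #|UTpat F pi|%:R : algC) != 0.
Proof.
have UT_gt0 : (0 < #|UT F n|)%N by apply/card_gt0P; exists 1%:M; exact: UT1.
have UTpat_gt0 : (0 < #|UTpat F pi|)%N by apply/card_gt0P; exists 1%:M; exact: UTpat1.
by rewrite mulf_neq0 ?invr_eq0 ?pnatr_eq0 -?lt0n.
Qed.

Lemma IndTriv_span_delta n (f : 'M[F]_n -> algC) :
  (exists c : {set 'I_n * 'I_n} -> algC, forall g, g \in UT F n ->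
     f g = \sum_(pi : {set 'I_n * 'I_n} | isNO pi) c pi * IndTriv pi g)
  <->
  (exists c : {set 'I_n * 'I_n} -> algC, forall g, g \in UT F n ->
     f g = \sum_(pi : {set 'I_n * 'I_n} | isNO pi) c pi * delta pi g).
Proof.
pose k (pi : {set 'I_n * 'I_n}) : algC := #|UT F n|%:R / #|UTpat F pi|%:R.
split=> -[c Hc]; [exists (fun pi => c pi * k pi) | exists (fun pi => c pi / k pi)];
  move=> g Hg; rewrite Hc //; apply: eq_bigr => pi Hpi; rewrite IndTriv_delta // mulrA //.
by rewrite divfK // UTpat_index_neq0.
Qed.

End UnitriangularGroup.

Section Independence.
Variable F : finFieldType.

Definition incidence_mx n (pi : {set 'I_n * 'I_n}) : 'M[F]_n :=
  \matrix_(i, j) ((i, j) \in pi)%:R.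

Lemma incidence_mx_sub1 n (pi : {set 'I_n * 'I_n}) i j : isNO pi ->
  (incidence_mx pi - 1%:M) i j != 0 -> ((i, j) \in pi) && (i != j).
Proof.
move=> Hpi; rewrite sub1mxE mxE.
case: (boolP ((i, j) \in pi)) => Hij; case: (eqVneq i j) => [eij|//]; rewrite ?subrr ?eqxx //.
by rewrite eij NO_refl in Hij.
Qed.

Lemma incidence_mx_UTpat n (pi : {set 'I_n * 'I_n}) : isNO pi -> incidence_mx pi \in UTpat F pi.
Proof.
move=> Hpi; rewrite UTpatE; apply/pattern_setP => i j /(incidence_mx_sub1 Hpi)/andP[Hij ne].
by rewrite Hij andbT ltn_neqAle (NO_le Hpi Hij) andbT.
Qed.

Lemma delta_incidence_mx n (pi rho : {set 'I_n * 'I_n}) : isNO pi -> isNO rho ->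
  delta rho (incidence_mx pi) = (pi \subset rho)%:R.
Proof.
move=> Hpi Hrho; rewrite /delta; congr (nat_of_bool _)%:R; apply/idP/subsetP.
- rewrite UTpatE => /pattern_setP H [i j] Hij.
  case: (eqVneq i j) => [<-|ne]; first exact: NO_refl.
  have/H/andP[] // : (incidence_mx pi - 1%:M) i j != 0.
  by rewrite sub1mxE mxE Hij (negPf ne) subr0 oner_eq0.
- move=> Hs; have := incidence_mx_UTpat Hpi; rewrite !UTpatE => /pattern_setP H.
  by apply/pattern_setP => i j /[dup] /H/andP[-> _] /(incidence_mx_sub1 Hpi)/andP[/Hs ->].
Qed.

(* Evaluate at the incidence matrix of a maximal pi with c pi != 0: only pi
   itself survives. *)
Lemma delta_lin_indep n (c : {set 'I_n * 'I_n} -> algC) :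
  (forall g, g \in UT F n ->
     \sum_(pi : {set 'I_n * 'I_n} | isNO pi) c pi * delta pi g = 0) ->
  forall pi, isNO pi -> c pi = 0.
Proof.
move=> H pi0 Hpi0; apply/eqP; apply: contraT => c0.
have pi0P : isNO pi0 && (c pi0 != 0) by rewrite Hpi0.
have [pm /andP[Hpm cpm] pm_max] :=
  @arg_maxnP _ pi0 (fun p => isNO p && (c p != 0)) (fun p => #|p|) pi0P.
have gUT : incidence_mx pm \in UT F n.
  by have := incidence_mx_UTpat Hpm; rewrite inE => /andP[].
have := H _ gUT; rewrite (bigD1 pm) //= big1 => [|p /andP[Hp ne]].
  by rewrite delta_incidence_mx // subxx mulr1 addr0 => /eqP; rewrite (negPf cpm).
rewrite delta_incidence_mx //; case: (eqVneq (c p) 0) => [->|cp]; first by rewrite mul0r.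
case: (boolP (pm \subset p)) => [Hs|]; last by rewrite mulr0.
have Hle : (#|p| <= #|pm|)%N by apply: pm_max; rewrite Hp cp.
by move: ne; rewrite eq_sym eqEcard Hs Hle.
Qed.

End Independence.

Section Product.
Variable F : finFieldType.

Lemma inrel_ord n (pi : {set 'I_n * 'I_n}) (i j : 'I_n) : inrel pi i j = ((i, j) \in pi).
Proof.
apply/existsP/idP => [[[a b] /andP[Hy /andP[/eqP e1 /eqP e2]]]|H]; last first.
  by exists (i, j); rewrite H !eqxx.
by have -> : (i, j) = (a, b) by congr (_, _); apply: val_inj.
Qed.

Lemma star_lshift n m (pi : {set 'I_n * 'I_n}) (rho : {set 'I_m * 'I_m}) i j :
  ((lshift m i, lshift m j) \in star pi rho) = ((i, j) \in pi).
Proof. by rewrite inE /= !ltn_ord /= inrel_ord. Qed.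

Lemma star_rshift n m (pi : {set 'I_n * 'I_n}) (rho : {set 'I_m * 'I_m}) i j :
  ((rshift n i, rshift n j) \in star pi rho) = ((i, j) \in rho).
Proof. by rewrite inE /= !ltnNge !leq_addr /= !addKn inrel_ord. Qed.

Lemma star_lrshift n m (pi : {set 'I_n * 'I_n}) (rho : {set 'I_m * 'I_m}) i j :
  (lshift m i, rshift n j) \in star pi rho.
Proof. by rewrite inE /= ltn_ord ltnNge leq_addr /= andbT leqNgt ltn_ord. Qed.

Lemma ulsubmx_sub1 n m (g : 'M[F]_(n + m)) i j :
  (ulsubmx g - 1%:M) i j = (g - 1%:M) (lshift m i) (lshift m j).
Proof. by rewrite !mxE (inj_eq (@lshift_inj _ _)). Qed.

Lemma drsubmx_sub1 n m (g : 'M[F]_(n + m)) i j :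
  (drsubmx g - 1%:M) i j = (g - 1%:M) (rshift n i) (rshift n j).
Proof. by rewrite !mxE (inj_eq (@rshift_inj _ _)). Qed.

Lemma UTpat_star n m (pi : {set 'I_n * 'I_n}) (rho : {set 'I_m * 'I_m}) g :
  g \in UT F (n + m) ->
  (g \in UTpat F (star pi rho)) = (ulsubmx g \in UTpat F pi) && (drsubmx g \in UTpat F rho).
Proof.
move=> Hg; rewrite !UTpatE.
apply/pattern_setP/andP => [H|[/pattern_setP Hl /pattern_setP Hr] i j].
  split; apply/pattern_setP => i j.
    by rewrite ulsubmx_sub1 => /H; rewrite star_lshift.
  by rewrite drsubmx_sub1 => /H; rewrite star_rshift /= ltn_add2l.
rewrite -[i]splitK -[j]splitK; case: (split i) => i'; case: (split j) => j' /=.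
- by rewrite -ulsubmx_sub1 => /Hl; rewrite star_lshift.
- by rewrite star_lrshift andbT /= ltn_addr.
- rewrite sub1mxE UT_lower0 //= ?ltn_addr // -val_eqE /= gtn_eqF ?ltn_addr //.
  by rewrite subrr eqxx.
- by rewrite -drsubmx_sub1 => /Hr; rewrite star_rshift /= ltn_add2l.
Qed.

Lemma mu_delta n m (pi : {set 'I_n * 'I_n}) (rho : {set 'I_m * 'I_m}) g :
  g \in UT F (n + m) -> mu (@delta F n pi) (@delta F m rho) g = delta (star pi rho) g.
Proof. by move=> Hg; rewrite /mu /delta UTpat_star // -natrM mulnb. Qed.

End Product.

Section Relabelling.
Variables (F : finFieldType) (n : nat) (J : {set 'I_n}).

Lemma cano_ltn_card (i : 'I_n) : i \in J -> (cano J i < #|J|)%N.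
Proof.
move=> Hi; apply: proper_card; apply/properP; split.
  by apply/subsetP => j; rewrite inE => /andP[].
by exists i => //; rewrite inE ltnn andbF.
Qed.

Lemma cano_ltn (i j : 'I_n) : j \in J -> (j < i)%N -> (cano J j < cano J i)%N.
Proof.
move=> Hj ji; apply: proper_card; apply/properP; split.
  by apply/subsetP => k; rewrite !inE => /andP[-> kj]; exact: ltn_trans kj ji.
by exists j; rewrite !inE ?Hj ?ji ?ltnn ?andbF.
Qed.

Lemma cano_inj : {in J &, injective (cano J)}.
Proof.
move=> i j Hi Hj E; case: (ltngtP i j) => [ij|ji|/val_inj //].
  by have := cano_ltn Hi ij; rewrite E ltnn.
by have := cano_ltn Hj ji; rewrite E ltnn.
Qed.

Lemma cano_surj k : (k < #|J|)%N -> exists2 i, i \in J & cano J i = k.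
Proof.
move=> Hk; set s := [seq cano J i | i <- enum J].
have Us : uniq s.
  by rewrite map_inj_in_uniq ?enum_uniq // => i j; rewrite !mem_enum; exact: cano_inj.
have Ss : {subset s <= iota 0 #|J|}.
  by move=> x /mapP[i]; rewrite mem_enum mem_iota add0n => Hi ->; rewrite cano_ltn_card.
have [|_ E] := uniq_min_size Us Ss; first by rewrite size_iota size_map -cardE.
have : k \in s by rewrite E mem_iota.
by case/mapP => i; rewrite mem_enum => Hi ->; exists i.
Qed.

Lemma cano_ord k (i : 'I_n) : #|J| = k -> i \in J -> exists i' : 'I_k, val i' = cano J i.
Proof. by move=> <- /cano_ltn_card Hi; exists (Ordinal Hi). Qed.

Lemma eq_cano k (i j : 'I_n) (i' j' : 'I_k) : i \in J -> j \in J ->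
  val i' = cano J i -> val j' = cano J j -> (i == j) = (i' == j').
Proof.
move=> Hi Hj Ei Ej; apply/eqP/eqP => [e|e]; first by apply: val_inj; rewrite Ei Ej e.
by apply: cano_inj; rewrite // -Ei -Ej e.
Qed.

Lemma ent_ord k (h : 'M[F]_k) (i j : 'I_k) : ent h i j = h i j.
Proof. by rewrite /ent !valK. Qed.

Lemma UTpat_shres (pi : {set 'I_n * 'I_n}) k (h : 'M[F]_k) :
  #|J| = k -> h \in UT F k ->
  (h \in UTpat F (shres pi J k)) =
  [forall i, forall j, (i \in J) ==> (j \in J) ==>
     (ent h (cano J i) (cano J j) - (i == j)%:R != 0) ==> ((i, j) \in pi)].
Proof.
move=> Hk Hh; rewrite inE Hh /=; apply/forallP/forallP.
- move=> H i; apply/forallP => j; apply/implyP => Hi; apply/implyP => Hj; apply/implyP.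
  have [i' Ei] := cano_ord Hk Hi; have [j' Ej] := cano_ord Hk Hj.
  rewrite -Ei -Ej ent_ord (eq_cano Hi Hj Ei Ej) -sub1mxE => Hn.
  have := forallP (H i') j'; rewrite Hn /= inE.
  case/existsP => [[y1 y2]] /= /andP[Hy /and4P[H1 H2 /eqP E1 /eqP E2]].
  rewrite Ei in E1; rewrite Ej in E2.
  by rewrite -(cano_inj H1 Hi E1) -(cano_inj H2 Hj E2).
- move=> H i'; apply/forallP => j'; apply/implyP => Hn.
  have [i Hi Ei] : exists2 i, i \in J & cano J i = i' by apply: cano_surj; rewrite Hk.
  have [j Hj Ej] : exists2 j, j \in J & cano J j = j' by apply: cano_surj; rewrite Hk.
  rewrite inE; apply/existsP; exists (i, j); rewrite /= Hi Hj Ei Ej !eqxx !andbT.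
  have := forallP (H i) j.
  by rewrite Hi Hj /= Ei Ej ent_ord (eq_cano Hi Hj (esym Ei) (esym Ej)) -sub1mxE Hn.
Qed.

Lemma UT_cano_block k (h : 'M[F]_k) (i j : 'I_n) :
  #|J| = k -> h \in UT F k -> i \in J -> j \in J ->
  ((j < i)%N ==> (ent h (cano J i) (cano J j) == 0)) &&
  ((i == j) ==> (ent h (cano J i) (cano J j) == 1)).
Proof.
move=> Hk Hh Hi Hj.
have [i' Ei] := cano_ord Hk Hi; have [j' Ej] := cano_ord Hk Hj.
rewrite -Ei -Ej ent_ord (eq_cano Hi Hj Ei Ej); apply/andP; split; apply/implyP.
  by move=> ji; rewrite UT_lower0 //= Ei Ej cano_ltn.
by move/eqP ->; rewrite UT_diag.
Qed.

End Relabelling.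

Lemma sumr_indicator (T : finType) (A : {set T}) (P : pred T) :
  \sum_(x in A) ((P x)%:R : algC) = #|[set x in A | P x]|%:R.
Proof.
rewrite (eq_bigr (fun x => if P x then 1 else 0)); last by move=> x _; case: (P x).
rewrite -big_mkcondr sumr_const; congr (_ *+ _); apply: eq_card => x; by rewrite !inE.
Qed.

Lemma qF_neq0 (F : finFieldType) : qF F != 0.
Proof. by rewrite pnatr_eq0 -lt0n; apply/card_gt0P; exists 0. Qed.

Section Coproduct.
Variables (F : finFieldType) (n : nat) (I : {set 'I_n}).

Definition cross_pairs : {set 'I_n * 'I_n} :=
  [set p : 'I_n * 'I_n | [&& (p.1 < p.2)%N, p.1 \in I & p.2 \notin I]].

Lemma URE : UR F I = pattern_set (fun i j => [&& (i < j)%N, i \in I & j \notin I]).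
Proof.
apply/setP => x; rewrite inE UTE.
apply/andP/pattern_setP => [[/pattern_setP H1 /forallP H2] i j Hij|H].
  by rewrite H1 //; have/forallP/(_ j)/implyP := H2 i; apply.
split; first by apply/pattern_setP => i j /H/and3P[].
by apply/forallP => i; apply/forallP => j; apply/implyP => /H/and3P[_ -> ->].
Qed.

Lemma card_UR : #|UR F I| = (#|F| ^ #|cross_pairs|)%N.
Proof. by rewrite URE card_pattern_set. Qed.

Lemma card_UR_UTpat (pi : {set 'I_n * 'I_n}) :
  #|UR F I :&: UTpat F pi| = (#|F| ^ #|cross_pairs :&: pi|)%N.
Proof.
have -> : UR F I :&: UTpat F pi = pattern_set (fun i j =>
    [&& (i < j)%N, i \in I & j \notin I] && ((i < j)%N && ((i, j) \in pi))).
  by apply/setP => x; rewrite inE URE UTpatE pattern_setI.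
rewrite card_pattern_set; congr (_ ^ _)%N; apply: eq_card => -[i j]; rewrite !inE /=.
by case: (i < j)%N; rewrite ?andbF.
Qed.

Lemma asc_cross_pairs (pi : {set 'I_n * 'I_n}) : asc pi I = #|cross_pairs :\: pi|.
Proof.
apply: eq_card => -[i j]; rewrite !inE /=.
by case: ((i, j) \in pi); case: (i \in I); case: (j \in I); case: (i < j)%N.
Qed.

Section Stinv.
Variables (a b : nat) (h1 : 'M[F]_a) (h2 : 'M[F]_b).
Hypotheses (Ha : #|I| = a) (Hb : #|~: I| = b) (H1 : h1 \in UT F a) (H2 : h2 \in UT F b).
Local Notation L := (stinv I h1 h2).

Lemma stinv_cross i j : (i \in I) != (j \in I) -> L i j = 0.
Proof. by rewrite mxE; case: (i \in I); case: (j \in I). Qed.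

Lemma cross_neq (i j : 'I_n) : (i \in I) != (j \in I) -> (i == j) = false.
Proof. by apply: contraNF => /eqP ->; rewrite eqxx. Qed.

Lemma stinv_UT : L \in UT F n.
Proof.
rewrite inE; apply/forallP => i; apply/forallP => j.
case: (eqVneq (i \in I) (j \in I)) => [E|ne]; last first.
  by rewrite stinv_cross // cross_neq // eqxx implybT.
rewrite mxE; case: (boolP (i \in I)) => Hi; rewrite -E Hi /=.
  by apply: (UT_cano_block Ha H1 Hi); rewrite -E.
have Hi' : i \in ~: I by rewrite inE.
have Hj' : j \in ~: I by rewrite inE -E.
exact: (UT_cano_block Hb H2 Hi' Hj').
Qed.

Lemma stinv_UTpat (pi : {set 'I_n * 'I_n}) :
  (L \in UTpat F pi) =
  (h1 \in UTpat F (shres pi I a)) && (h2 \in UTpat F (shres pi (~: I) b)).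
Proof.
rewrite (UTpat_shres _ Ha H1) (UTpat_shres _ Hb H2) inE stinv_UT /=.
apply/forallP/andP => [H|[/forallP HA /forallP HB] i].
  split; apply/forallP => i; apply/forallP => j; apply/implyP => Hi; apply/implyP => Hj;
    have := forallP (H i) j; rewrite sub1mxE mxE.
    by rewrite Hi Hj.
  by move: Hi Hj; rewrite !inE => /negPf-> /negPf->.
apply/forallP => j; apply/implyP.
case: (eqVneq (i \in I) (j \in I)) => [E|ne]; last first.
  by rewrite sub1mxE stinv_cross // cross_neq // subrr eqxx.
rewrite sub1mxE mxE; case: (boolP (i \in I)) => Hi; rewrite -E Hi /=.
  by have := forallP (HA i) j; rewrite Hi -E Hi /= => /implyP.
have Hi' : i \in ~: I by rewrite inE.
have Hj' : j \in ~: I by rewrite inE -E.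
by have := forallP (HB i) j; rewrite Hi' Hj' /= => /implyP.
Qed.

Definition lmulUR (x : 'M[F]_n) : 'M[F]_n := 1%:M + L *m (x - 1%:M).

Lemma lmulUR_sub1 x : lmulUR x - 1%:M = L *m (x - 1%:M).
Proof. by rewrite /lmulUR [1%:M + _]addrC addrK. Qed.

Lemma stinv_mul_sub1 x : L *m x - 1%:M = (L - 1%:M) + L *m (x - 1%:M).
Proof. by rewrite mulmxBr mulmx1 [RHS]addrC addrA subrK. Qed.

Lemma stinv_sub1_cross i j : (L - 1%:M) i j != 0 -> (i \in I) = (j \in I).
Proof. by apply: contraNeq => ne; rewrite sub1mxE stinv_cross // cross_neq // subrr. Qed.

Lemma stinv_mul_UR_cross x i j : x \in UR F I ->
  (L *m (x - 1%:M)) i j != 0 -> [&& (i < j)%N, i \in I & j \notin I].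
Proof.
rewrite URE => /pattern_setP Hx /mulmx_neq0[k /andP[Lik /Hx/and3P[kj Hk Hj]]].
rewrite Hj andbT (leq_ltn_trans (UT_neq0_le stinv_UT Lik) kj) /=.
by apply: contraTT Lik => Hi; rewrite negbK stinv_cross // (negPf Hi) Hk.
Qed.

Lemma lmulUR_UR x : x \in UR F I -> lmulUR x \in UR F I.
Proof.
move=> Hx; rewrite URE; apply/pattern_setP => i j.
by rewrite lmulUR_sub1; exact: stinv_mul_UR_cross.
Qed.

Lemma lmulUR_inj : injective lmulUR.
Proof. by move=> x y /addrI /(can_inj (mulKmx (UT_unitmx stinv_UT))) /addIr. Qed.

Lemma lmulUR_onto : lmulUR @: UR F I = UR F I.
Proof.
apply/eqP; rewrite eqEcard card_imset ?leqnn ?andbT; last exact: lmulUR_inj.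
by apply/subsetP => _ /imsetP[x Hx ->]; exact: lmulUR_UR.
Qed.

Lemma UTpat_stinv_mul (pi : {set 'I_n * 'I_n}) x : x \in UR F I ->
  (L *m x \in UTpat F pi) = (L \in UTpat F pi) && (lmulUR x \in UTpat F pi).
Proof.
move=> Hx; rewrite !UTpatE.
apply/pattern_setP/andP => [H|[/pattern_setP HL /pattern_setP Hf] i j]; last first.
  rewrite stinv_mul_sub1 addmxE => /addr_neq0/orP[/HL //|]; rewrite -lmulUR_sub1; exact: Hf.
split; apply/pattern_setP => i j Hn; apply: H; rewrite stinv_mul_sub1 addmxE.
  have -> : (L *m (x - 1%:M)) i j = 0.
    apply/eqP; apply: contraT => /(stinv_mul_UR_cross Hx)/and3P[_ Hi Hj].
    by move: (stinv_sub1_cross Hn); rewrite Hi (negPf Hj).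
  by rewrite addr0.
rewrite lmulUR_sub1 in Hn; have -> : (L - 1%:M) i j = 0.
  apply/eqP; apply: contraT => /stinv_sub1_cross.
  by have/and3P[_ -> /negPf ->] := stinv_mul_UR_cross Hx Hn.
by rewrite add0r.
Qed.

Lemma sum_delta_stinv_mul (pi : {set 'I_n * 'I_n}) :
  \sum_(x in UR F I) delta pi (L *m x) = delta pi L * #|UR F I :&: UTpat F pi|%:R.
Proof.
under eq_bigr => x Hx do rewrite /delta (UTpat_stinv_mul _ Hx) -mulnb natrM.
rewrite -mulr_sumr sumr_indicator -(card_imset _ lmulUR_inj); congr (_ * _%:R).
apply: eq_card => y; rewrite [in RHS]inE; apply/imsetP/andP => [[x]|[Hy HyT]].
  by rewrite inE => /andP[Hx HxT] ->; rewrite lmulUR_UR.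
have : y \in lmulUR @: UR F I by rewrite lmulUR_onto.
by case/imsetP => x Hx Ey; exists x => //; rewrite inE Hx -Ey.
Qed.

Lemma DeltaI_delta (pi : {set 'I_n * 'I_n}) :
  DeltaI (@delta F n pi) I h1 h2 =
  qF F ^- asc pi I * delta (shres pi I a) h1 * delta (shres pi (~: I) b) h2.
Proof.
rewrite /DeltaI sum_delta_stinv_mul {1}/delta stinv_UTpat -mulnb natrM.
rewrite card_UR card_UR_UTpat.
rewrite -(cardsID pi cross_pairs) -asc_cross_pairs !natrX exprD /delta.
have := qF_neq0 F; rewrite /qF => q0.
by field; rewrite !expf_neq0.
Qed.

End Stinv.

End Coproduct.

Theorem corollary7p6 (F : finFieldType) :
  (* (i) scf(UT_n) = span{Ind(1)} equals span{delta_pi}, and the delta_pi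
     (pi in NO_n) are class functions forming a basis of it; hence
     inc(pi) |-> delta_pi is a linear isomorphism IG(q^-1) -> scf(UT_.) *)
  (forall n : nat,
     (forall f : 'M[F]_n -> algC,
        (exists c : {set 'I_n * 'I_n} -> algC, forall g, g \in UT F n ->
           f g = \sum_(pi : {set 'I_n * 'I_n} | isNO pi) c pi * IndTriv pi g)
        <->
        (exists c : {set 'I_n * 'I_n} -> algC, forall g, g \in UT F n ->
           f g = \sum_(pi : {set 'I_n * 'I_n} | isNO pi) c pi * delta pi g))
     /\ (forall pi : {set 'I_n * 'I_n}, isNO pi -> is_classfun (@delta F n pi))
     /\ (forall c : {set 'I_n * 'I_n} -> algC,
           (forall g, g \in UT F n ->
              \sum_(pi : {set 'I_n * 'I_n} | isNO pi) c pi * delta pi g = 0) ->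
           forall pi, isNO pi -> c pi = 0)) /\
  (* (ii) product formula *)
  (forall (n m : nat) (pi : {set 'I_n * 'I_n}) (rho : {set 'I_m * 'I_m}),
     isNO pi -> isNO rho ->
     forall g, g \in UT F (n + m) ->
       mu (@delta F n pi) (@delta F m rho) g = delta (star pi rho) g) /\
  (* (iii) coproduct formula, in each graded component cf(UT_a) (x) cf(UT_(n-a)) *)
  (forall (n : nat) (pi : {set 'I_n * 'I_n}), isNO pi ->
     forall (a : nat), (a <= n)%N ->
     forall (h1 : 'M[F]_a) (h2 : 'M[F]_(n - a)),
       h1 \in UT F a -> h2 \in UT F (n - a) ->
       \sum_(I : {set 'I_n} | #|I| == a) DeltaI (@delta F n pi) I h1 h2
       = \sum_(I : {set 'I_n} | #|I| == a)
           (qF F) ^- (asc pi I) * delta (shres pi I a) h1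
                                * delta (shres pi (~: I) (n - a)) h2).
Proof.
split; [|split].
- move=> n; split; first exact: IndTriv_span_delta.
  by split; [exact: delta_classfun | exact: delta_lin_indep].
- by move=> n m pi rho _ _ g; exact: mu_delta.
- move=> n pi _ a _ h1 h2 H1 H2; apply: eq_bigr => I /eqP HI.
  have HIc : #|~: I| = (n - a)%N.
    by have := cardsC I; rewrite card_ord HI => E; rewrite -[in RHS]E addKn.
  exact: DeltaI_delta.
Qed.
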